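(* Let $G$ be a finite simple connected graph and $H$ a connected subgraph of $G$. If $\beta(H)=n(H)-t$ and $d_H(u,v)=d_G(u,v)$ for all pairs of vertices $u,v$ of $H$, then $\beta(G)\le n(G)-t$.
   Context: $n(X)$ denotes the number of vertices of a graph $X$ and $d_X$ its shortest-path distance. For an ordered set $W=\{w_1,\dots,w_k\}$ of vertices of a connected graph $X$, $r(v|W)=(d_X(v,w_1),\dots,d_X(v,w_k))$; $W$ is a resolving set if distinct vertices have distinct vectors $r(\cdot|W)$, and $\beta(X)$, the metric dimension, is the minimum size of a resolving set. *)

(* A graph is given by a vertex set V : {set T} inside a
   finite type T and a boolean edge relation e : rel T whose edges lie in V.
   The whole graph G uses V = [set: T]. *)
From mathcomp Require Import all_boot.
Set Implicit Arguments. Unset Strict Implicit. Unset Printing Implicit Defensive.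

Section Graphs.
Variable T : finType.

Definition simple_graph (e : rel T) : Prop := symmetric e /\ irreflexive e.

Fixpoint reachn (e : rel T) (n : nat) (x y : T) : bool :=
  if n is n'.+1 then (x == y) || [exists z, e x z && reachn e n' z y]
  else x == y.

(* shortest-path distance: least n with a walk of length <= n; in a connected
   graph on at most #|T| vertices this is < #|T|, so searching 0..#|T|-1
   suffices (the value #|T| is returned for unreachable pairs, never used). *)
Definition gdist (e : rel T) (x y : T) : nat :=
  find (fun n => reachn e n x y) (iota 0 #|T|).

Definition gconnected (V : {set T}) (e : rel T) : Prop :=
  forall u v, u \in V -> v \in V -> connect e u v.

Definition resolving (V : {set T}) (e : rel T) (W : {set T}) : bool :=
  (W \subset V) &&
  [forall u in V, forall v in V,
     [forall w in W, gdist e u w == gdist e v w] ==> (u == v)].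

Definition metric_dim (V : {set T}) (e : rel T) : nat :=
  \big[minn/#|T|]_(W : {set T} | resolving V e W) #|W|.

Definition subgraph (e : rel T) (S : {set T}) (eH : rel T) : Prop :=
  symmetric eH /\
  (forall x y, eH x y -> [/\ x \in S, y \in S & e x y]).

End Graphs.

(* Given a metric basis W of H, the set W together with all vertices outside H
   resolves G: a vertex outside H is at distance 0 only from itself, and two
   vertices of H are told apart by W because H is isometric in G.  Hence
   beta(G) <= beta(H) + (n(G) - n(H)) = n(G) - t. *)
From mathcomp Require Import all_boot.
From mathcomp Require Import zify.

Set Implicit Arguments.
Unset Strict Implicit.
Unset Printing Implicit Defensive.

Section Distance.
Variables (T : finType) (e : rel T).

Lemma gdist_eq0 u v : (gdist e u v == 0) = (u == v).
Proof.
rewrite /gdist; have : 0 < #|T| by apply/card_gt0P; exists u.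
by case: #|T| => // n _ /=; case: (u == v).
Qed.

Lemma gdistxx u : gdist e u u = 0.
Proof. by apply/eqP; rewrite gdist_eq0. Qed.

End Distance.

Section MetricDimension.
Variables (T : finType) (V : {set T}) (e : rel T).

Lemma resolving_self : resolving V e V.
Proof.
rewrite /resolving subxx /=.
apply/'forall_in_'forall_in_implyP => u _ v vV /'forall_in_eqP Huv.
by have := Huv v vV; rewrite gdistxx => /eqP; rewrite gdist_eq0 eq_sym.
Qed.

Lemma metric_dim_min W : resolving V e W -> metric_dim V e <= #|W|.
Proof.
move=> RW; rewrite /metric_dim unlock.
have : W \in index_enum {set T} by rewrite mem_index_enum.
elim: (index_enum _) => //= X s IHs; rewrite in_cons => /predU1P [<- | Ws].
  by rewrite RW geq_minl.
by case: (resolving V e X); rewrite ?geq_min (IHs Ws) ?orbT.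
Qed.

(* The minimum is attained: the default value #|T| of the big minn never wins,
   since V itself resolves and #|V| <= #|T|. *)
Lemma metric_dimP : exists2 W, resolving V e W & #|W| = metric_dim V e.
Proof.
have [Hm|//] : metric_dim V e = #|T| \/
    exists2 W, resolving V e W & #|W| = metric_dim V e.
  apply: (big_ind (fun m => m = #|T| \/ exists2 W, resolving V e W & #|W| = m)).
  - by left.
  - by move=> x y Hx Hy; rewrite /minn; case: ifP.
  - by move=> W RW; right; exists W.
exists V; first exact: resolving_self.
apply/eqP; rewrite Hm eqn_leq max_card -Hm.
exact: metric_dim_min resolving_self.
Qed.

End MetricDimension.

Section IsometricSubgraph.
Variables (T : finType) (e : rel T) (S : {set T}) (eH : rel T).
Hypothesis isometric :
  forall u v, u \in S -> v \in S -> gdist eH u v = gdist e u v.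

Lemma resolving_setU_compl W :
  resolving S eH W -> resolving [set: T] e (W :|: ~: S).
Proof.
case/andP=> WS /'forall_in_'forall_in_implyP RW.
rewrite /resolving subsetT /=.
apply/'forall_in_'forall_in_implyP => u _ v _ /'forall_in_eqP Huv.
have [uS|uNS] := boolP (u \in S); last first.
  have := Huv u; rewrite !inE uNS orbT gdistxx => /(_ isT) /esym /eqP.
  by rewrite gdist_eq0 eq_sym.
have [vS|vNS] := boolP (v \in S); last first.
  have := Huv v; rewrite !inE vNS orbT gdistxx => /(_ isT) /eqP.
  by rewrite gdist_eq0.
apply: RW => //; apply/'forall_in_eqP => w wW.
have wS : w \in S by apply: (subsetP WS).
by rewrite !isometric // Huv // inE wW.
Qed.

Lemma metric_dim_isometric_sub :
  metric_dim [set: T] e + #|S| <= metric_dim S eH + #|T|.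
Proof.
have [W RW <-] := metric_dimP S eH.
have WS : W \subset S by case/andP: RW.
have disjW : [disjoint W & ~: S] by rewrite -subsets_disjoint.
have := metric_dim_min (resolving_setU_compl RW).
rewrite cardsU (disjoint_setI0 disjW) cards0 subn0.
have := cardsC S; lia.
Qed.

End IsometricSubgraph.

Theorem proposition2p5 (T : finType) (e : rel T) (S : {set T}) (eH : rel T)
    (t : nat) :
  simple_graph e -> gconnected [set: T] e ->
  subgraph e S eH -> gconnected S eH ->
  metric_dim S eH + t = #|S| ->
  (forall u v, u \in S -> v \in S -> gdist eH u v = gdist e u v) ->
  metric_dim [set: T] e + t <= #|T|.
Proof.
move=> _ _ _ _ dimS isometric.
have := metric_dim_isometric_sub isometric; rewrite -dimS; lia.
Qed.
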